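(* Assume (A1)–(A3). Let $s\ge0$, $\alpha^*\in I$, $\alpha_s\in(\underline{\alpha},\alpha^* )$ and $u_s\in B_{\alpha_s}$. Let $t>\tau>s$ satisfy $\tau<s+T(\alpha_s,\alpha^* )$ and $t<\min\bigl\{\tau+T(\alpha(\tau,s,\alpha_s),\alpha^* ),\,s+T(\alpha_s,\alpha^* )\bigr\}$. Then $$U(s,t)u_s=U(\tau,t)U(s,\tau)u_s.$$
   Context: Standing assumptions (A1)–(A3): (A1) Fix $\underline{\alpha}>0$, $\overline{\alpha}\in(0,\infty]$ and set $I=(\underline{\alpha},\overline{\alpha})$. $(B_\alpha,\lVert\cdot\rVert_\alpha)_{\alpha\in I}$ is a family of Banach spaces such that for $\alpha'\le\alpha''$ in $I$: $B_{\alpha'}\subset B_{\alpha''}$ and $\lVert u\rVert_{\alpha'}\ge\lVert u\rVert_{\alpha''}$ for $u\in B_{\alpha'}$; moreover, if $u\in B_{\alpha'}$ and $u=0$ in $B_{\alpha''}$ then $u=0$ in $B_{\alpha'}$. Put $B_I:=\bigcup_{\alpha\in I}B_\alpha$. (A2) For each $\alpha\in I$ there are a closed linear subspace $C_\alpha\subset B_\alpha$ and a dense (in $C_\alpha$) linear subspace $D_\alpha\subset C_\alpha$. $A:B_I\to B_I$ is linear and, for each $\alpha\in I$, $(A,D_\alpha)$ is the generator of a $C_0$-semigroup $S_\alpha(t)$ on $(C_\alpha,\lVert\cdot\rVert_\alpha)$. For all $\alpha'<\alpha$ in $I$: $B_{\alpha'}\subset D_\alpha$, $B_{\alpha'}$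 is $S_\alpha(t)$-invariant, and $S_\alpha(t)\restriction_{B_{\alpha'}}=S_{\alpha'}(t)$. There are constants $\nu\ge1$, $\omega\in\mathbb{R}$, independent of $\alpha$, with $\lVert S_\alpha(t)\rVert\le\nu e^{\omega t}$ for all $t\ge0$, $\alpha\in I$. (A3) $M,N:I\to(0,\infty)$ are increasing continuous functions, and $Z:B_I\to B_I$ is linear such that for any $\alpha^*\in I$ and any $\alpha',\alpha''\in(\underline{\alpha},\alpha^*]$ with $\alpha'<\alpha''$, $Z$ maps $B_{\alpha'}$ boundedly into $B_{\alpha''}$ with $\lVert Zu\rVert_{\alpha''}\le\bigl(\frac{M(\alpha^* )}{\alpha''-\alpha'}+N(\alpha^* )\bigr)\lVert u\rVert_{\alpha'}$ for $u\in B_{\alpha'}$. Define $T(\alpha,\beta):=\dfrac{\beta-\alpha}{e\,\nu\,M(\beta)}$ for $\beta\ge\alpha>\underline{\alpha}$. For $\alpha\in I$, $B_{\alpha+}:=\bigcap_{\beta>\alpha,\,\beta\in I}B_\beta$. For $s\ge0$, $\alpha^*\in I$, $\alpha_s\in(\underline{\alpha},\alpha^* )$, $u_s\in B_{\alpha_s+}$ and $t\in[s,s+T(\alpha_s,\alpha^* ))$, $U(s,t)u_s:=u(t)$, where $u$ is the unique solution on $[s,s+T(\alpha_s,\alpha^* ))$ in $B_{\alpha^*}$ of $u'=Au+Zu$, $u(s)=u_s$ (with $Au(t),Zu(t)\in B_{\alpha^*}$), and $\alpha(t,s,\alpha_s):=\inf\{\alpha\in[\alpha_s,\alpha^* )\mid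 u(t)\in B_\alpha\}$; one has $\alpha(t,s,\alpha_s)<\alpha^*$ and $U(s,t)u_s\in B_{\alpha(t,s,\alpha_s)+}$, so $U(\tau,t)$ is applied to the initial value $U(s,\tau)u_s\in B_{\alpha(\tau,s,\alpha_s)+}$ at time $\tau$. *)

From Stdlib Require Import Reals Lra.
Open Scope R_scope.

(** * Ambient real vector space.  The spaces B_alpha are modelled as nested
    linear subspaces of one ambient real vector space (so B_I is their union). *)
Record RVS := {
  vcar :> Type;
  vzero : vcar;
  vadd : vcar -> vcar -> vcar;
  vopp : vcar -> vcar;
  vscal : R -> vcar -> vcar;
  vaddA : forall x y z, vadd x (vadd y z) = vadd (vadd x y) z;
  vaddC : forall x y, vadd x y = vadd y x;
  vadd0 : forall x, vadd x vzero = x;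
  vaddN : forall x, vadd x (vopp x) = vzero;
  vscal1 : forall x, vscal 1 x = x;
  vscalA : forall a b x, vscal a (vscal b x) = vscal (a * b) x;
  vscalDl : forall a b x, vscal (a + b) x = vadd (vscal a x) (vscal b x);
  vscalDr : forall a x y, vscal a (vadd x y) = vadd (vscal a x) (vscal a y)
}.
Arguments vzero {_}. Arguments vadd {_}. Arguments vopp {_}. Arguments vscal {_}.

Definition vsub {X : RVS} (x y : X) : X := vadd x (vopp y).

Section Generic.
Variable X : RVS.

Definition subspace (P : X -> Prop) : Prop :=
  P vzero /\ (forall x y, P x -> P y -> P (vadd x y)) /\
  (forall a x, P x -> P (vscal a x)).

Definition norm_on (P : X -> Prop) (n : X -> R) : Prop :=
  forall x y a, P x -> P y ->
    0 <= n x /\ (n x = 0 -> x = vzero) /\ n (vscal a x) = Rabs a * n x /\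
    n (vadd x y) <= n x + n y.

Definition seq_conv (n : X -> R) (x : nat -> X) (y : X) : Prop :=
  forall eps, 0 < eps -> exists K : nat, forall k, (K <= k)%nat -> n (vsub (x k) y) < eps.

Definition seq_cauchy (n : X -> R) (x : nat -> X) : Prop :=
  forall eps, 0 < eps -> exists K : nat, forall k m, (K <= k)%nat -> (K <= m)%nat ->
    n (vsub (x k) (x m)) < eps.

Definition banach (P : X -> Prop) (n : X -> R) : Prop :=
  subspace P /\ norm_on P n /\
  (forall x, (forall k, P (x k)) -> seq_cauchy n x -> exists y, P y /\ seq_conv n x y).

Definition closed_subspace (P : X -> Prop) (n : X -> R) (Q : X -> Prop) : Prop :=
  subspace Q /\ (forall x, Q x -> P x) /\
  (forall x y, (forall k, Q (x k)) -> P y -> seq_conv n x y -> Q y).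

Definition dense_subspace (Q : X -> Prop) (n : X -> R) (Q' : X -> Prop) : Prop :=
  subspace Q' /\ (forall x, Q' x -> Q x) /\
  (forall x eps, Q x -> 0 < eps -> exists d, Q' d /\ n (vsub x d) < eps).

Definition lim_right0 (n : X -> R) (f : R -> X) (y : X) : Prop :=
  forall eps, 0 < eps -> exists delta, 0 < delta /\
    forall h, 0 < h < delta -> n (vsub (f h) y) < eps.

Definition C0_generator (C : X -> Prop) (n : X -> R) (A : X -> X) (D : X -> Prop)
  (S : R -> X -> X) : Prop :=
  (forall t, 0 <= t ->
     (forall x, C x -> C (S t x)) /\
     (forall x y a, C x -> C y -> S t (vadd x y) = vadd (S t x) (S t y) /\
                                   S t (vscal a x) = vscal a (S t x)) /\
     (exists K, forall x, C x -> n (S t x) <= K * n x)) /\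
  (forall x, C x -> S 0 x = x) /\
  (forall t r x, 0 <= t -> 0 <= r -> C x -> S (t + r) x = S t (S r x)) /\
  (forall x, C x -> lim_right0 n (fun h => S h x) x) /\
  (forall x, C x ->
     (D x <-> exists y, C y /\ lim_right0 n (fun h => vscal (/ h) (vsub (S h x) x)) y)) /\
  (forall x, D x -> lim_right0 n (fun h => vscal (/ h) (vsub (S h x) x)) (A x)).

End Generic.

Arguments subspace {X}. Arguments norm_on {X}. Arguments seq_conv {X}.
Arguments seq_cauchy {X}. Arguments banach {X}. Arguments closed_subspace {X}.
Arguments dense_subspace {X}. Arguments lim_right0 {X}. Arguments C0_generator {X}.

(** The parameter interval I = (al, ah); ah = None encodes ah = +infinity. *)
Definition inI (al : R) (ah : option R) (x : R) : Prop :=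
  al < x /\ match ah with Some b => x < b | None => True end.

Definition inBI {X : RVS} (al : R) (ah : option R) (B : R -> X -> Prop) (x : X) : Prop :=
  exists a, inI al ah a /\ B a x.

Definition linear_BI {X : RVS} al ah (B : R -> X -> Prop) (L : X -> X) : Prop :=
  (forall x, inBI al ah B x -> inBI al ah B (L x)) /\
  (forall x y a, inBI al ah B x -> inBI al ah B y ->
     L (vadd x y) = vadd (L x) (L y) /\ L (vscal a x) = vscal a (L x)).

Definition Assum_A1 {X : RVS} (al : R) (ah : option R) (B : R -> X -> Prop) (nrm : R -> X -> R)
  : Prop :=
  0 < al /\ (match ah with Some b => 0 < b | None => True end) /\
  (forall a, inI al ah a -> banach (B a) (nrm a)) /\
  (forall a1 a2 u, inI al ah a1 -> inI al ah a2 -> a1 <= a2 -> B a1 u ->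
     B a2 u /\ nrm a2 u <= nrm a1 u).
(* The condition "u in B_a1, u = 0 in B_a2 implies u = 0 in B_a1" is automatic
   in this model, since all B_a share the zero of the ambient space. *)

Definition Assum_A2 {X : RVS} (al : R) (ah : option R) (B : R -> X -> Prop) (nrm : R -> X -> R)
  (C D : R -> X -> Prop) (A : X -> X) (S : R -> R -> X -> X) (nu omega : R) : Prop :=
  (forall a, inI al ah a ->
     closed_subspace (B a) (nrm a) (C a) /\ dense_subspace (C a) (nrm a) (D a) /\
     C0_generator (C a) (nrm a) A (D a) (S a)) /\
  linear_BI al ah B A /\
  (forall a1 a, inI al ah a1 -> inI al ah a -> a1 < a ->
     (forall x, B a1 x -> D a x) /\
     (forall t x, 0 <= t -> B a1 x -> B a1 (S a t x)) /\
     (forall t x, 0 <= t -> B a1 x -> S a t x = S a1 t x)) /\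
  1 <= nu /\
  (forall a t x, inI al ah a -> 0 <= t -> C a x -> nrm a (S a t x) <= nu * exp (omega * t) * nrm a x).

Definition Assum_A3 {X : RVS} (al : R) (ah : option R) (B : R -> X -> Prop) (nrm : R -> X -> R)
  (Z : X -> X) (M N : R -> R) : Prop :=
  (forall a, inI al ah a -> 0 < M a /\ 0 < N a) /\
  (forall a b, inI al ah a -> inI al ah b -> a <= b -> M a <= M b /\ N a <= N b) /\
  (forall a eps, inI al ah a -> 0 < eps -> exists delta, 0 < delta /\
     forall b, inI al ah b -> Rabs (b - a) < delta ->
       Rabs (M b - M a) < eps /\ Rabs (N b - N a) < eps) /\
  linear_BI al ah B Z /\
  (forall astar a1 a2 u, inI al ah astar -> al < a1 -> a1 < a2 -> a2 <= astar -> B a1 u ->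
     B a2 (Z u) /\ nrm a2 (Z u) <= (M astar / (a2 - a1) + N astar) * nrm a1 u).

Definition Tlen (nu : R) (M : R -> R) (a b : R) : R := (b - a) / (exp 1 * nu * M b).

Definition is_solution {X : RVS} (B : R -> X -> Prop) (nrm : R -> X -> R) (A Z : X -> X)
  (astar s L : R) (u0 : X) (u : R -> X) : Prop :=
  u s = u0 /\
  forall t, s <= t < s + L ->
    B astar (u t) /\ B astar (A (u t)) /\ B astar (Z (u t)) /\
    (forall eps, 0 < eps -> exists delta, 0 < delta /\
       forall h, h <> 0 -> Rabs h < delta -> s <= t + h < s + L ->
         nrm astar (vsub (vscal (/ h) (vsub (u (t + h)) (u t))) (vadd (A (u t)) (Z (u t))))
           < eps).

Definition is_alpha_inf {X : RVS} (B : R -> X -> Prop) (x : X) (a_s astar a : R) : Prop :=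
  (forall b, a_s <= b < astar -> B b x -> a <= b) /\
  (forall c, (forall b, a_s <= b < astar -> B b x -> c <= b) -> c <= a).

From Stdlib Require Import Reals Lra Lia List Classical Factorial.
Open Scope R_scope.

(* Both [u] and [v] solve [w' = A w + Z w] in [B_astar] on [[tau, t]] with the same value at
   [tau], so their difference [w] solves it with [w(tau) = 0]; it suffices to show that such a
   [w] vanishes.  Fix [b > astar] in [I].  On a short interval [[c, c + eta]] with [w(c) = 0]
   the mild formula [w(r) = int_c^r S(r - s) Z w(s) ds], taken in [B_a] for [a > astar] (where
   [B_astar] lies in the domain of the generator), together with
   [|Z|_(a' -> a' + d) <= const / d], gives by induction over [n] intermediate scales of width
   [d = (b - astar) / n] (Ovsyannikov's method)
     [|w(r)|_b <= K (const n (r - c) / (b - astar))^n / n! <= K (e const eta / (b - astar))^n],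
   which tends to [0] once [eta] is small.  The integral is replaced by a mean-value inequality
   for [s |-> S(r - s) w(s)].  Real induction then propagates [w = 0] from [tau] to [t].  The
   bounds on [t] in terms of [T] only make [U] well defined; uniqueness does not need them. *)

Section VectorAlgebra.
Variable X : RVS.

Lemma vadd0l (x : X) : vadd vzero x = x.
Proof. rewrite vaddC; apply vadd0. Qed.

Lemma vaddNl (x : X) : vadd (vopp x) x = vzero.
Proof. rewrite vaddC; apply vaddN. Qed.

Lemma vaddI (a b c : X) : vadd a b = vadd a c -> b = c.
Proof.
  intros H.
  rewrite <- (vadd0l b), <- (vadd0l c), <- (vaddNl a), <- !vaddA, H; reflexivity.
Qed.

Lemma vscal0 (x : X) : vscal 0 x = vzero.
Proof.
  apply (vaddI (vscal 0 x)); rewrite vadd0, <- vscalDl; f_equal; ring.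
Qed.

Lemma voppE (x : X) : vopp x = vscal (-1) x.
Proof.
  apply (vaddI x); rewrite vaddN.
  rewrite <- (vscal1 _ x) at 1; rewrite <- vscalDl.
  replace (1 + -1) with 0 by ring; now rewrite vscal0.
Qed.

Lemma vscalr0 (a : R) : vscal a (@vzero X) = vzero.
Proof. rewrite <- (vscal0 vzero) at 1; rewrite vscalA, Rmult_0_r; apply vscal0. Qed.

Lemma vaddACA (a b c d : X) : vadd (vadd a b) (vadd c d) = vadd (vadd a c) (vadd b d).
Proof. rewrite !vaddA; f_equal; rewrite <- !vaddA; f_equal; apply vaddC. Qed.

(* Reflexive normalisation: a formal expression over atoms [xs] evaluates to the linear
   combination of the atoms with coefficients [coef e]. *)
Inductive vexp :=
  VAt (n : nat) | VAdd (a b : vexp) | VSub (a b : vexp) | VOpp (a : vexp)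
| VScal (r : R) (a : vexp) | VZero.

Fixpoint veval (xs : list X) (e : vexp) : X :=
  match e with
  | VAt n => nth n xs vzero
  | VAdd a b => vadd (veval xs a) (veval xs b)
  | VSub a b => vsub (veval xs a) (veval xs b)
  | VOpp a => vopp (veval xs a)
  | VScal r a => vscal r (veval xs a)
  | VZero => vzero
  end.

Fixpoint coef (e : vexp) (i : nat) : R :=
  match e with
  | VAt n => if Nat.eqb i n then 1 else 0
  | VAdd a b => coef a i + coef b i
  | VSub a b => coef a i - coef b i
  | VOpp a => - coef a i
  | VScal r a => r * coef a i
  | VZero => 0
  end.

Fixpoint lincomb (xs : list X) (f : nat -> R) : X :=
  match xs with
  | nil => vzero
  | x :: t => vadd (vscal (f O) x) (lincomb t (fun i => f (S i)))
  end.

Lemma lincomb_ext xs : forall f g,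
  (forall i, (i < length xs)%nat -> f i = g i) -> lincomb xs f = lincomb xs g.
Proof.
  induction xs as [|x t IH]; intros f g H; simpl; auto.
  rewrite (H O) by (simpl; lia); f_equal; apply IH; intros i Hi; apply H; simpl; lia.
Qed.

Lemma lincomb0 xs : lincomb xs (fun _ => 0) = vzero.
Proof. induction xs as [|x t IH]; simpl; auto; rewrite IH, vscal0, vadd0; auto. Qed.

Lemma lincombD xs : forall f g,
  lincomb xs (fun i => f i + g i) = vadd (lincomb xs f) (lincomb xs g).
Proof.
  induction xs as [|x t IH]; intros f g; simpl; [now rewrite vadd0|].
  rewrite IH, vscalDl; apply vaddACA.
Qed.

Lemma lincombZ xs : forall r f, lincomb xs (fun i => r * f i) = vscal r (lincomb xs f).
Proof.
  induction xs as [|x t IH]; intros r f; simpl; [now rewrite vscalr0|].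
  rewrite IH, vscalDr, vscalA; auto.
Qed.

Lemma lincombN xs f : lincomb xs (fun i => - f i) = vopp (lincomb xs f).
Proof. rewrite voppE, <- lincombZ; apply lincomb_ext; intros; ring. Qed.

Lemma lincomb_nth xs : forall n,
  nth n xs vzero = lincomb xs (fun i => if Nat.eqb i n then 1 else 0).
Proof.
  induction xs as [|x t IH]; intros n; simpl; [destruct n; auto|].
  destruct n as [|n]; simpl.
  - rewrite vscal1, <- (vadd0 _ x) at 1; rewrite <- (lincomb0 t); reflexivity.
  - rewrite vscal0, vadd0l; apply IH.
Qed.

Lemma veval_lincomb xs e : veval xs e = lincomb xs (coef e).
Proof.
  induction e; simpl.
  - apply lincomb_nth.
  - rewrite IHe1, IHe2, <- lincombD; auto.
  - unfold vsub; rewrite IHe1, IHe2, <- lincombN, <- lincombD.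
    apply lincomb_ext; intros; ring.
  - rewrite IHe, <- lincombN; auto.
  - rewrite IHe, <- lincombZ; auto.
  - symmetry; apply lincomb0.
Qed.

Lemma veval_eq xs e1 e2 :
  (forall i, (i < length xs)%nat -> coef e1 i = coef e2 i) -> veval xs e1 = veval xs e2.
Proof. intros H; rewrite !veval_lincomb; now apply lincomb_ext. Qed.

End VectorAlgebra.

Ltac vindex e xs :=
  lazymatch xs with
  | cons e _ => constr:(O)
  | cons _ ?t => let n := vindex e t in constr:(S n)
  end.

Ltac vreify xs e :=
  lazymatch e with
  | vadd ?a ?b => let a' := vreify xs a in let b' := vreify xs b in constr:(VAdd a' b')
  | vsub ?a ?b => let a' := vreify xs a in let b' := vreify xs b in constr:(VSub a' b')
  | vopp ?a => let a' := vreify xs a in constr:(VOpp a')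
  | vscal ?r ?a => let a' := vreify xs a in constr:(VScal r a')
  | vzero => constr:(VZero)
  | _ => let n := vindex e xs in constr:(VAt n)
  end.

(* [vring xs] proves an identity of vector expressions built over the atoms [xs], by
   comparing coefficients with [ring]/[field] (using hypotheses for nonzero divisors). *)
Ltac vring xs :=
  lazymatch goal with
  | |- ?l = ?r =>
    let l' := vreify xs l in let r' := vreify xs r in
    change (veval _ xs l' = veval _ xs r');
    apply veval_eq; intros i Hi; simpl in Hi;
    repeat (first [lia | destruct i as [|i]; [cbn; first [ring | field; assumption | field] |]])
  end.

Lemma vsub_eq0 {X : RVS} (x y : X) : vsub x y = vzero -> x = y.
Proof.
  intros H; replace x with (vadd (vsub x y) y) by vring (x :: y :: nil).
  rewrite H; apply vadd0l.
Qed.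

Section NormedSubspace.
Variables (X : RVS) (P : X -> Prop) (n : X -> R).
Hypothesis HP : subspace P.

Lemma P0 : P vzero. Proof. apply HP. Qed.
Lemma Padd x y : P x -> P y -> P (vadd x y). Proof. apply HP. Qed.
Lemma Pscal a x : P x -> P (vscal a x). Proof. apply HP. Qed.
Lemma Popp x : P x -> P (vopp x). Proof. intros; rewrite voppE; now apply Pscal. Qed.
Lemma Psub x y : P x -> P y -> P (vsub x y). Proof. intros; apply Padd; auto; now apply Popp. Qed.

Hypothesis Hn : norm_on P n.
Local Set Default Proof Using "HP Hn".

Lemma norm_ge0 x : P x -> 0 <= n x. Proof. intros H; apply (Hn x x 0 H H). Qed.
Lemma norm_eq0 x : P x -> n x = 0 -> x = vzero. Proof. intros H; apply (Hn x x 0 H H). Qed.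
Lemma normZ a x : P x -> n (vscal a x) = Rabs a * n x. Proof. intros H; apply (Hn x x a H H). Qed.
Lemma norm_triangle x y : P x -> P y -> n (vadd x y) <= n x + n y.
Proof. intros H H'; apply (Hn x y 0 H H'). Qed.

Lemma normN x : P x -> n (vopp x) = n x.
Proof. intros H; rewrite voppE, normZ, Rabs_left by (auto; lra); ring. Qed.

Lemma norm_sub_le x y : P x -> P y -> n (vsub x y) <= n x + n y.
Proof.
  intros; unfold vsub; rewrite <- (normN y) by auto; apply norm_triangle; auto; now apply Popp.
Qed.

Lemma norm0 : n vzero = 0.
Proof. rewrite <- (vscal0 _ vzero), normZ by apply P0; rewrite Rabs_R0; ring. Qed.

Lemma norm_sub_self x : n (vsub x x) = 0.
Proof. replace (vsub x x) with (@vzero X) by vring (x :: nil); apply norm0. Qed.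

Lemma norm_subC x y : P x -> P y -> n (vsub x y) = n (vsub y x).
Proof.
  intros; replace (vsub x y) with (vopp (vsub y x)) by vring (x :: y :: nil).
  apply normN, Psub; auto.
Qed.

Lemma norm_sub_triangle x y z : P x -> P y -> P z ->
  n (vsub x z) <= n (vsub x y) + n (vsub y z).
Proof.
  intros; replace (vsub x z) with (vadd (vsub x y) (vsub y z)) by vring (x :: y :: z :: nil).
  apply norm_triangle; apply Psub; auto.
Qed.

Lemma norm_le_eps_eq0 x : P x -> (forall eps, 0 < eps -> n x < eps) -> x = vzero.
Proof.
  intros Hx Heps; apply norm_eq0; auto.
  apply Rle_antisym; [|now apply norm_ge0].
  apply le_epsilon; intros eps Hpos; rewrite Rplus_0_l; left; auto.
Qed.

End NormedSubspace.

Ltac subspace_closure HP :=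
  repeat first [assumption | apply (P0 _ _ HP) | apply (Psub _ _ HP) | apply (Pscal _ _ HP)
    | apply (Popp _ _ HP) | apply (Padd _ _ HP)].

Lemma real_induction (Q : R -> Prop) (a b : R) :
  (forall c, a <= c <= b -> (forall y, a <= y < c -> Q y) -> Q c) ->
  (forall c, a <= c < b -> (forall y, a <= y <= c -> Q y) ->
     exists d, 0 < d /\ forall y, c < y < c + d -> y <= b -> Q y) ->
  forall y, a <= y <= b -> Q y.
Proof.
  intros Hclosed Hopen y Hy.
  set (E := fun x => a <= x <= b /\ forall z, a <= z <= x -> Q z).
  assert (Ea : E a).
  { split; [lra|]; intros z Hz; replace z with a by lra; apply Hclosed; [lra|].
    intros; lra. }
  assert (Hbound : bound E) by (exists b; intros x [Hx _]; lra).
  destruct (completeness E Hbound (ex_intro _ a Ea)) as [c [Hub Hlub]].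
  assert (Hac : a <= c) by now apply Hub.
  assert (Hcb : c <= b) by (apply Hlub; intros x [Hx _]; lra).
  assert (Hbelow : forall z, a <= z < c -> Q z).
  { intros z Hz; destruct (classic (exists x, E x /\ z <= x)) as [[x [[_ Hx] Hzx]]|Hno].
    - apply Hx; lra.
    - exfalso; enough (c <= z) by lra.
      apply Hlub; intros x Ex; destruct (Rle_lt_dec x z); auto.
      exfalso; apply Hno; exists x; split; auto; lra. }
  assert (Hupto : forall z, a <= z <= c -> Q z).
  { intros z Hz; destruct (Rle_lt_or_eq_dec _ _ (proj2 Hz)) as [Hzc|Hzc]; [apply Hbelow; lra|].
    subst z; apply Hclosed; auto; lra. }
  destruct (Rle_lt_or_eq_dec _ _ Hcb) as [Hlt|Hcb']; [|apply Hupto; lra].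
  exfalso; destruct (Hopen c (conj Hac Hlt) Hupto) as [d [Hd Hstep]].
  set (c' := Rmin (c + d / 2) b).
  assert (Hc' : c < c' <= b) by (unfold c'; apply Rmin_case_strong; lra).
  assert (E c').
  { split; [lra|]; intros z Hz; destruct (Rle_lt_dec z c); [apply Hupto; lra|].
    apply Hstep; try lra; unfold c' in Hz; revert Hz; apply Rmin_case_strong; lra. }
  enough (c' <= c) by lra; now apply Hub.
Qed.

Lemma continuity_pt_left (phi : R -> R) (s : R) : continuity_pt phi s ->
  forall eps, 0 < eps -> exists delta, 0 < delta /\
    forall h, 0 < h < delta -> Rabs (phi s - phi (s - h)) < eps.
Proof.
  intros Hc eps Heps; destruct (Hc eps Heps) as [d [Hd Hphi]].
  exists d; split; auto; intros h Hh.
  rewrite Rabs_minus_sym; apply (Hphi (s - h)); split.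
  - split; [exact I | lra].
  - change (Rabs (s - h - s) < d); rewrite Rabs_left by lra; lra.
Qed.

Lemma le_0_of_slopes (x L : R) : 0 <= L -> (forall eps, 0 < eps -> x <= eps * L) -> x <= 0.
Proof.
  intros HL Hx; apply le_epsilon; intros e He; rewrite Rplus_0_l.
  apply Rle_trans with (e / (L + 1) * L); [apply Hx, Rdiv_lt_0_compat; lra|].
  apply Rmult_le_reg_r with (L + 1); [lra|]; field_simplify; [nra | lra].
Qed.

Section MeanValue.
Variables (X : RVS) (P : X -> Prop) (n : X -> R).
Hypotheses (HP : subspace P) (Hn : norm_on P n).

Lemma norm_mean_value (F : R -> X) (phi : R -> R) (a b : R) :
  a <= b -> (forall s, a <= s <= b -> P (F s)) ->
  (forall s, a < s <= b -> forall eps, 0 < eps -> exists delta, 0 < delta /\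
     forall h, 0 < h < delta -> a <= s - h -> n (vsub (F s) (F (s - h))) < eps) ->
  (forall s, a < s <= b -> continuity_pt phi s) ->
  (forall s, a <= s < b -> forall eps, 0 < eps -> exists delta, 0 < delta /\
     forall h, 0 < h < delta -> s + h <= b ->
       n (vsub (F (s + h)) (F s)) <= phi (s + h) - phi s + eps * h) ->
  n (vsub (F b) (F a)) <= phi b - phi a.
Proof.
  intros Hab HF HFl Hphi Hr.
  set (G := fun y => n (vsub (F y) (F a)) - (phi y - phi a)).
  assert (Hsplit : forall y c, a <= y <= b -> a <= c <= b ->
            G y <= n (vsub (F y) (F c)) - (phi y - phi c) + G c).
  { intros y c Hy Hc; unfold G.
    pose proof (norm_sub_triangle _ _ _ HP Hn (F y) (F c) (F a)
                  (HF y Hy) (HF c Hc) (HF a ltac:(lra))); lra. }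
  enough (G b <= 0) by (unfold G in *; lra).
  apply (le_0_of_slopes _ (b - a)); [lra|]; intros eps Heps.
  apply (real_induction (fun y => G y <= eps * (y - a)) a b); [| |lra].
  - intros c Hc Hbelow.
    destruct (Rle_lt_or_eq_dec _ _ (proj1 Hc)) as [Hac|Hac].
    2: { subst c; unfold G; rewrite (norm_sub_self _ _ _ HP Hn); lra. }
    apply le_epsilon; intros e He.
    destruct (HFl c (conj Hac (proj2 Hc)) (e / 2) ltac:(lra)) as [d1 [Hd1 HF1]].
    destruct (continuity_pt_left phi c (Hphi c (conj Hac (proj2 Hc))) (e / 2) ltac:(lra))
      as [d2 [Hd2 Hphi2]].
    set (h := Rmin (Rmin d1 d2) (c - a) / 2).
    assert (Hh : 0 < h /\ h < d1 /\ h < d2 /\ h <= c - a).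
    { unfold h; repeat apply Rmin_case_strong; lra. }
    specialize (HF1 h ltac:(lra) ltac:(lra)); specialize (Hphi2 h ltac:(lra)).
    pose proof (Hsplit c (c - h) ltac:(lra) ltac:(lra)).
    pose proof (Hbelow (c - h) ltac:(lra)).
    apply Rabs_def2 in Hphi2; assert (0 <= eps * h) by nra; lra.
  - intros c Hc Hupto.
    destruct (Hr c Hc eps Heps) as [d [Hd Hder]].
    exists d; split; auto; intros y Hy Hyb.
    specialize (Hder (y - c) ltac:(lra)); replace (c + (y - c)) with y in Hder by ring.
    pose proof (Hsplit y c ltac:(lra) ltac:(lra)).
    pose proof (Hupto c ltac:(lra)); specialize (Hder ltac:(lra)); nra.
Qed.

End MeanValue.

Lemma pow_add_ge k x y : 0 <= x -> 0 <= y ->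
  x ^ S k + INR (S k) * x ^ k * y <= (x + y) ^ S k.
Proof.
  intros Hx Hy; induction k as [|k IH]; [simpl; lra|].
  change ((x + y) ^ S (S k)) with ((x + y) * (x + y) ^ S k).
  assert (0 <= x ^ k) by (apply pow_le; lra).
  assert (0 <= INR k) by apply pos_INR.
  assert ((x + y) * (x ^ S k + INR (S k) * x ^ k * y) <= (x + y) * (x + y) ^ S k)
    by (apply Rmult_le_compat_l; lra).
  assert (0 <= y * y * x ^ k * (INR k + 1)) by (repeat apply Rmult_le_pos; nra).
  cbn [pow] in *; rewrite !S_INR in *; nra.
Qed.

Lemma exp_pow x n : exp x ^ n = exp (INR n * x).
Proof.
  induction n as [|n IH]; [simpl; now rewrite Rmult_0_l, exp_0|].
  cbn [pow]; rewrite IH, <- exp_plus, S_INR; f_equal; ring.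
Qed.

(* From [(1 + 1/n)^n <= e] by induction on [n]. *)
Lemma pow_le_exp_fact n : INR n ^ n <= exp (INR n) * INR (fact n).
Proof.
  induction n as [|n IH]; [simpl; rewrite exp_0; lra|].
  assert (Hstep : INR (S n) ^ n <= exp 1 * INR n ^ n).
  { destruct n as [|n]; [simpl; pose proof (exp_ineq1_le 1); lra|].
    set (m := INR (S n)).
    assert (Hm : 0 < m) by (apply lt_0_INR; lia).
    replace (INR (S (S n))) with (m * (1 + / m))
      by (unfold m; rewrite (S_INR (S n)); field; apply not_0_INR; lia).
    rewrite Rpow_mult_distr, (Rmult_comm (exp 1)).
    apply Rmult_le_compat_l; [apply pow_le; lra|].
    apply Rle_trans with (exp (/ m) ^ S n).
    - assert (0 < / m) by now apply Rinv_0_lt_compat.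
      apply pow_incr; split; [lra | apply exp_ineq1_le].
    - rewrite exp_pow; fold m; replace (m * / m) with 1 by (field; lra); lra. }
  replace (exp (INR (S n)) * INR (fact (S n)))
    with (INR (S n) * (exp 1 * (exp (INR n) * INR (fact n))))
    by (rewrite fact_simpl, mult_INR, S_INR, exp_plus; ring).
  change (INR (S n) ^ S n) with (INR (S n) * INR (S n) ^ n).
  apply Rmult_le_compat_l; [apply pos_INR|].
  apply Rle_trans with (1 := Hstep), Rmult_le_compat_l; [left; apply exp_pos | exact IH].
Qed.

Definition deriv_defect {X : RVS} (A Z : X -> X) (w : R -> X) (r h : R) : X :=
  vsub (vscal (/ h) (vsub (w (r + h)) (w r))) (vadd (A (w r)) (Z (w r))).

(* Unlike [is_solution]: a closed interval, one-sided derivatives at both ends and no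
   initial value. *)
Definition solves_on {X : RVS} (P : X -> Prop) (n : X -> R) (A Z : X -> X)
  (lo hi : R) (w : R -> X) : Prop :=
  (forall r, lo <= r <= hi -> P (w r) /\ P (A (w r)) /\ P (Z (w r))) /\
  (forall r, lo <= r <= hi -> forall eps, 0 < eps -> exists delta, 0 < delta /\
     forall h, h <> 0 -> Rabs h < delta -> lo <= r + h <= hi ->
       n (deriv_defect A Z w r h) < eps).

Lemma is_solution_solves_on {X : RVS} (B : R -> X -> Prop) (nrm : R -> X -> R)
  (A Z : X -> X) (a s L : R) (u0 : X) (u : R -> X) (lo hi : R) :
  is_solution B nrm A Z a s L u0 u -> s <= lo -> hi < s + L ->
  solves_on (B a) (nrm a) A Z lo hi u.
Proof.
  intros [_ Hu] Hlo Hhi; split.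
  - intros r Hr; destruct (Hu r ltac:(lra)) as [? [? [? _]]]; auto.
  - intros r Hr eps Heps; destruct (Hu r ltac:(lra)) as [_ [_ [_ Hd]]].
    destruct (Hd eps Heps) as [d [Hd0 Hdq]]; exists d; split; auto.
    intros h Hh0 Hh Hrh; apply Hdq; auto; lra.
Qed.

Lemma solves_on_sub_interval {X : RVS} (P : X -> Prop) (n : X -> R) (A Z : X -> X)
  (lo hi lo' hi' : R) (w : R -> X) :
  lo <= lo' -> hi' <= hi -> solves_on P n A Z lo hi w -> solves_on P n A Z lo' hi' w.
Proof.
  intros Hlo Hhi [Hw Hd]; split; [intros r Hr; apply Hw; lra|].
  intros r Hr eps Heps; destruct (Hd r ltac:(lra) eps Heps) as [d [Hd0 Hdq]].
  exists d; split; auto; intros h Hh0 Hh Hrh; apply Hdq; auto; lra.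
Qed.

Lemma linear_BI_sub {X : RVS} al ah (B : R -> X -> Prop) (L : X -> X) (a : R) :
  linear_BI al ah B L -> inI al ah a -> subspace (B a) ->
  forall x y, B a x -> B a y -> L (vsub x y) = vsub (L x) (L y).
Proof.
  intros [_ HL] Ha HP x y Hx Hy.
  assert (Ix : inBI al ah B x) by (exists a; auto).
  assert (Iy : inBI al ah B y) by (exists a; auto).
  assert (Iy' : inBI al ah B (vscal (-1) y)) by (exists a; split; auto; now apply Pscal).
  unfold vsub; rewrite !voppE.
  destruct (HL x (vscal (-1) y) 0 Ix Iy') as [-> _]; destruct (HL y y (-1) Iy Iy) as [_ ->].
  reflexivity.
Qed.

Section Solutions.
Variables (X : RVS) (P : X -> Prop) (n : X -> R) (A Z : X -> X).
Hypotheses (HP : subspace P) (Hn : norm_on P n).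

Lemma solves_on_continuous lo hi w : solves_on P n A Z lo hi w ->
  forall r, lo <= r <= hi -> forall eps, 0 < eps -> exists delta, 0 < delta /\
    forall h, Rabs h < delta -> lo <= r + h <= hi -> n (vsub (w (r + h)) (w r)) < eps.
Proof.
  intros [Hw Hd] r Hr eps Heps.
  destruct (Hd r Hr 1 ltac:(lra)) as [d [Hd0 Hdq]].
  destruct (Hw r Hr) as [Bw [BA BZ]].
  set (Q := n (vadd (A (w r)) (Z (w r)))).
  assert (HQ : 0 <= Q) by (apply (norm_ge0 _ _ _ HP Hn); subspace_closure HP).
  exists (Rmin d (eps / (1 + Q))); split.
  { apply Rmin_pos; auto; apply Rdiv_lt_0_compat; lra. }
  intros h Hh Hrh.
  assert (Hh1 : Rabs h < d) by (apply Rlt_le_trans with (1 := Hh), Rmin_l).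
  assert (Hh2 : Rabs h < eps / (1 + Q)) by (apply Rlt_le_trans with (1 := Hh), Rmin_r).
  destruct (Req_dec h 0) as [->|Hh0].
  { rewrite Rplus_0_r, (norm_sub_self _ _ _ HP Hn); auto. }
  assert (Bwh : P (w (r + h))) by (apply Hw; lra).
  replace (vsub (w (r + h)) (w r))
    with (vscal h (vadd (deriv_defect A Z w r h) (vadd (A (w r)) (Z (w r)))))
    by (unfold deriv_defect; vring (w (r + h) :: w r :: A (w r) :: Z (w r) :: nil)).
  assert (BDq : P (deriv_defect A Z w r h)) by (unfold deriv_defect; subspace_closure HP).
  rewrite (normZ _ _ _ HP Hn) by subspace_closure HP.
  assert (n (vadd (deriv_defect A Z w r h) (vadd (A (w r)) (Z (w r)))) < 1 + Q).
  { eapply Rle_lt_trans; [apply (norm_triangle _ _ _ HP Hn); subspace_closure HP|].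
    pose proof (Hdq h Hh0 Hh1 Hrh); unfold Q; lra. }
  apply Rle_lt_trans with (Rabs h * (1 + Q)).
  - apply Rmult_le_compat_l; [apply Rabs_pos | lra].
  - apply Rlt_le_trans with (eps / (1 + Q) * (1 + Q)); [apply Rmult_lt_compat_r; lra|].
    right; field; lra.
Qed.

Lemma solves_on_sub lo hi u v :
  (forall x y, P x -> P y -> A (vsub x y) = vsub (A x) (A y)) ->
  (forall x y, P x -> P y -> Z (vsub x y) = vsub (Z x) (Z y)) ->
  solves_on P n A Z lo hi u -> solves_on P n A Z lo hi v ->
  solves_on P n A Z lo hi (fun r => vsub (u r) (v r)).
Proof.
  intros HA HZ [Hu Hdu] [Hv Hdv]; split.
  - intros r Hr; destruct (Hu r Hr) as [? [? ?]]; destruct (Hv r Hr) as [? [? ?]].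
    rewrite HA, HZ by auto; split; [|split]; subspace_closure HP.
  - intros r Hr eps Heps.
    destruct (Hdu r Hr (eps / 2) ltac:(lra)) as [d1 [Hd1 Hdq1]].
    destruct (Hdv r Hr (eps / 2) ltac:(lra)) as [d2 [Hd2 Hdq2]].
    exists (Rmin d1 d2); split; [now apply Rmin_pos|].
    intros h Hh0 Hh Hrh.
    assert (h1 : Rabs h < d1) by (apply Rlt_le_trans with (1 := Hh), Rmin_l).
    assert (h2 : Rabs h < d2) by (apply Rlt_le_trans with (1 := Hh), Rmin_r).
    specialize (Hdq1 h Hh0 h1 Hrh); specialize (Hdq2 h Hh0 h2 Hrh).
    destruct (Hu r Hr) as [? [? ?]]; destruct (Hv r Hr) as [? [? ?]].
    destruct (Hu (r + h) Hrh) as [? _]; destruct (Hv (r + h) Hrh) as [? _].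
    replace (deriv_defect A Z (fun r => vsub (u r) (v r)) r h)
      with (vsub (deriv_defect A Z u r h) (deriv_defect A Z v r h)).
    2: { unfold deriv_defect; rewrite HA, HZ by auto.
         vring (u (r + h) :: u r :: v (r + h) :: v r :: A (u r) :: A (v r)
                :: Z (u r) :: Z (v r) :: nil). }
    assert (P (deriv_defect A Z u r h)) by (unfold deriv_defect; subspace_closure HP).
    assert (P (deriv_defect A Z v r h)) by (unfold deriv_defect; subspace_closure HP).
    eapply Rle_lt_trans; [apply (norm_sub_le _ _ _ HP Hn); auto|]; lra.
Qed.

End Solutions.

Section C0Semigroup.
Variables (X : RVS) (C : X -> Prop) (n : X -> R) (A : X -> X) (D : X -> Prop)
  (S : R -> X -> X).
Hypotheses (HC : subspace C) (HS : C0_generator C n A D S).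

Lemma sg_stable t x : 0 <= t -> C x -> C (S t x).
Proof. intros Ht; apply (proj1 HS t Ht). Qed.

Lemma sg_sub t x y : 0 <= t -> C x -> C y -> S t (vsub x y) = vsub (S t x) (S t y).
Proof.
  intros Ht Hx Hy; destruct (proj1 HS t Ht) as [_ [Hlin _]].
  assert (C (vscal (-1) y)) by now apply Pscal.
  unfold vsub; rewrite !voppE.
  destruct (Hlin x (vscal (-1) y) 0 Hx H) as [-> _]; destruct (Hlin y y (-1) Hy Hy) as [_ ->].
  reflexivity.
Qed.

Lemma sg_zero t : 0 <= t -> S t vzero = vzero.
Proof.
  intros Ht; assert (C0 : C vzero) by now apply P0.
  destruct (proj1 HS t Ht) as [_ [Hlin _]].
  rewrite <- (vscal0 _ vzero) at 1; rewrite (proj2 (Hlin _ _ 0 C0 C0)); apply vscal0.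
Qed.

Lemma sg_at0 x : C x -> S 0 x = x.
Proof. apply HS. Qed.

Lemma sg_add t r x : 0 <= t -> 0 <= r -> C x -> S (t + r) x = S t (S r x).
Proof. apply HS. Qed.

Lemma sg_right_cont x : C x -> lim_right0 n (fun h => S h x) x.
Proof. apply HS. Qed.

Lemma sg_generator x : D x -> lim_right0 n (fun h => vscal (/ h) (vsub (S h x) x)) (A x).
Proof. apply HS. Qed.

End C0Semigroup.

Section Scale.
Variables (X : RVS) (al : R) (ah : option R) (B : R -> X -> Prop) (nrm : R -> X -> R)
  (C D : R -> X -> Prop) (A Z : X -> X) (Sg : R -> R -> X -> X) (nu omega : R) (M N : R -> R).
Hypotheses (H1 : Assum_A1 al ah B nrm) (H2 : Assum_A2 al ah B nrm C D A Sg nu omega)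
  (H3 : Assum_A3 al ah B nrm Z M N).
Variables a0 b : R.
Hypotheses (Ha0 : inI al ah a0) (Hb : inI al ah b) (Hab : a0 < b).

Lemma inI_between a : a0 <= a <= b -> inI al ah a.
Proof.
  intros Ha; destruct Ha0 as [Hl _]; destruct Hb as [_ Hh]; split; [lra|].
  destruct ah; auto; lra.
Qed.

Lemma B_subspace a : a0 <= a <= b -> subspace (B a).
Proof. intros Ha; destruct H1 as [_ [_ [Hban _]]]; apply (Hban a (inI_between a Ha)). Qed.

Lemma B_norm a : a0 <= a <= b -> norm_on (B a) (nrm a).
Proof. intros Ha; destruct H1 as [_ [_ [Hban _]]]; apply (Hban a (inI_between a Ha)). Qed.

Lemma B_incl a1 a2 x : a0 <= a1 <= a2 -> a2 <= b -> B a1 x -> B a2 x /\ nrm a2 x <= nrm a1 x.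
Proof.
  intros; destruct H1 as [_ [_ [_ Hmono]]]; apply Hmono; auto; try apply inI_between; lra.
Qed.

Lemma C_subspace a : a0 < a <= b -> subspace (C a).
Proof. intros Ha; apply (proj1 H2 a (inI_between a ltac:(lra))). Qed.

Lemma C_generator a : a0 < a <= b -> C0_generator (C a) (nrm a) A (D a) (Sg a).
Proof. intros Ha; apply (proj1 H2 a (inI_between a ltac:(lra))). Qed.

Lemma C_in_B a x : a0 < a <= b -> C a x -> B a x.
Proof. intros Ha; apply (proj1 H2 a (inI_between a ltac:(lra))). Qed.

Lemma B0_in_D a x : a0 < a <= b -> B a0 x -> D a x.
Proof. intros Ha; apply (proj2 H2); auto; [apply inI_between|]; lra. Qed.

Lemma B0_in_C a x : a0 < a <= b -> B a0 x -> C a x.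
Proof.
  intros Ha Hx; apply (proj1 H2 a (inI_between a ltac:(lra))); now apply B0_in_D.
Qed.

Definition S_bnd := nu * exp (Rabs omega).

Lemma S_bnd_ge1 : 1 <= S_bnd.
Proof.
  unfold S_bnd; destruct H2 as [_ [_ [_ [Hnu _]]]].
  pose proof (exp_ineq1_le (Rabs omega)); pose proof (Rabs_pos omega); nra.
Qed.

Lemma sg_norm_le a t x : a0 < a <= b -> 0 <= t <= 1 -> C a x ->
  nrm a (Sg a t x) <= S_bnd * nrm a x.
Proof.
  intros Ha Ht Hx; destruct H2 as [_ [_ [_ [Hnu Hgrowth]]]].
  apply Rle_trans with (nu * exp (omega * t) * nrm a x).
  - apply Hgrowth; auto; [apply inI_between|]; lra.
  - assert (0 <= nrm a x).
    { apply (norm_ge0 _ (B a)); [apply B_subspace | apply B_norm | apply C_in_B]; auto; lra. }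
    assert (exp (omega * t) <= exp (Rabs omega)).
    { assert (omega * t <= Rabs omega * t) by (apply Rmult_le_compat_r; [lra | apply Rle_abs]).
      assert (Hle : omega * t <= Rabs omega) by (pose proof (Rabs_pos omega); nra).
      destruct (Rle_lt_or_eq_dec _ _ Hle) as [Hlt|Heq]; [left; now apply exp_increasing|].
      rewrite Heq; lra. }
    unfold S_bnd; apply Rmult_le_compat_r; auto; apply Rmult_le_compat_l; lra.
Qed.

Definition Z_bnd := M b + N b * (b - a0).

Lemma Z_bnd_pos : 0 < Z_bnd.
Proof.
  unfold Z_bnd; destruct (proj1 H3 b Hb).
  assert (0 < N b * (b - a0)) by (apply Rmult_lt_0_compat; lra); lra.
Qed.

Lemma Z_loss a1 a2 u : a0 <= a1 -> a1 < a2 -> a2 <= b -> B a1 u ->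
  B a2 (Z u) /\ nrm a2 (Z u) <= Z_bnd / (a2 - a1) * nrm a1 u.
Proof.
  intros H01 H12 H2b Hu; destruct H3 as [Hpos [_ [_ [_ HZ]]]].
  assert (al < a1) by (destruct Ha0; lra).
  destruct (HZ b a1 a2 u Hb H H12 H2b Hu) as [HBZ HnZ]; split; auto.
  apply Rle_trans with (1 := HnZ), Rmult_le_compat_r.
  - apply (norm_ge0 _ (B a1)); auto; [apply B_subspace | apply B_norm]; lra.
  - destruct (Hpos b Hb); unfold Z_bnd.
    apply Rmult_le_reg_r with (a2 - a1); [lra|].
    replace ((M b / (a2 - a1) + N b) * (a2 - a1)) with (M b + N b * (a2 - a1)) by (field; lra).
    replace ((M b + N b * (b - a0)) / (a2 - a1) * (a2 - a1)) with (M b + N b * (b - a0))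
      by (field; lra).
    assert (N b * (a2 - a1) <= N b * (b - a0)) by (apply Rmult_le_compat_l; lra); lra.
Qed.

Definition ovs_const := S_bnd * Z_bnd.

Lemma ovs_const_pos : 0 < ovs_const.
Proof. unfold ovs_const; pose proof S_bnd_ge1; pose proof Z_bnd_pos; nra. Qed.

Section MildFormula.
Variables (a : R) (w : R -> X) (c hi r : R).
Hypotheses (Ha : a0 < a <= b) (Hw : solves_on (B a0) (nrm a0) A Z c hi w)
  (Hr : c <= r <= hi) (Hhi : hi <= c + 1).

Let HP0 : subspace (B a0) := B_subspace a0 (conj (Rle_refl a0) (Rlt_le _ _ Hab)).
Let HN0 : norm_on (B a0) (nrm a0) := B_norm a0 (conj (Rle_refl a0) (Rlt_le _ _ Hab)).
Let HPa : subspace (B a) := B_subspace a (conj (Rlt_le _ _ (proj1 Ha)) (proj2 Ha)).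
Let HNa : norm_on (B a) (nrm a) := B_norm a (conj (Rlt_le _ _ (proj1 Ha)) (proj2 Ha)).
Let HCa : subspace (C a) := C_subspace a Ha.
Let HSa : C0_generator (C a) (nrm a) A (D a) (Sg a) := C_generator a Ha.

Lemma w_in_C s : c <= s <= hi -> C a (w s).
Proof. intros Hs; apply B0_in_C; auto; apply (proj1 Hw s Hs). Qed.

Lemma norm_le_B0 x : B a0 x -> nrm a x <= nrm a0 x.
Proof. intros Hx; apply (B_incl a0 a x); auto; lra. Qed.

Lemma mild_left_increment s h : 0 < h -> c <= s - h -> s <= r ->
  vsub (Sg a (r - s) (w s)) (Sg a (r - (s - h)) (w (s - h))) =
  vadd (Sg a (r - s + h) (vsub (w s) (w (s - h)))) (Sg a (r - s) (vsub (w s) (Sg a h (w s)))).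
Proof.
  intros Hh Hsh Hs.
  assert (Cws := w_in_C s ltac:(lra)); assert (Cwsh := w_in_C (s - h) ltac:(lra)).
  assert (CSh : C a (Sg a h (w s))) by (apply (sg_stable _ _ _ _ _ _ HSa); auto; lra).
  replace (r - (s - h)) with (r - s + h) by ring.
  rewrite !(sg_sub _ _ _ _ _ _ HCa HSa) by (auto; lra).
  rewrite (sg_add _ _ _ _ _ _ HSa (r - s) h (w s)) by (auto; lra).
  vring (Sg a (r - s) (w s) :: Sg a (r - s) (Sg a h (w s)) :: Sg a (r - s + h) (w (s - h)) :: nil).
Qed.

Lemma mild_left_continuous s : c < s <= r -> forall eps, 0 < eps -> exists delta, 0 < delta /\
  forall h, 0 < h < delta -> c <= s - h ->
    nrm a (vsub (Sg a (r - s) (w s)) (Sg a (r - (s - h)) (w (s - h)))) < eps.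
Proof.
  intros Hs eps Heps.
  pose proof S_bnd_ge1 as Hnu.
  set (e := eps / (2 * S_bnd)).
  assert (He : 0 < e) by (unfold e; apply Rdiv_lt_0_compat; lra).
  assert (Cws := w_in_C s ltac:(lra)).
  destruct (solves_on_continuous _ _ _ _ _ HP0 HN0 c hi w Hw s ltac:(lra) e He)
    as [d1 [Hd1 Hcont]].
  destruct (sg_right_cont _ _ _ _ _ _ HSa (w s) Cws e He) as [d2 [Hd2 Hsg]].
  exists (Rmin d1 d2); split; [now apply Rmin_pos|]; intros h Hh Hsh.
  assert (h1 : h < d1) by (apply Rlt_le_trans with (1 := proj2 Hh), Rmin_l).
  assert (h2 : h < d2) by (apply Rlt_le_trans with (1 := proj2 Hh), Rmin_r).
  assert (Cwsh := w_in_C (s - h) ltac:(lra)).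
  assert (CSh : C a (Sg a h (w s))) by (apply (sg_stable _ _ _ _ _ _ HSa); auto; lra).
  rewrite mild_left_increment by lra.
  assert (C1 : C a (vsub (w s) (w (s - h)))) by subspace_closure HCa.
  assert (C2 : C a (vsub (w s) (Sg a h (w s)))) by subspace_closure HCa.
  eapply Rle_lt_trans.
  { apply (norm_triangle _ _ _ HPa HNa); apply (C_in_B a); auto;
      apply (sg_stable _ _ _ _ _ _ HSa); auto; lra. }
  assert (T1 := sg_norm_le a (r - s + h) _ Ha ltac:(lra) C1).
  assert (T2 := sg_norm_le a (r - s) _ Ha ltac:(lra) C2).
  assert (T3 : nrm a (vsub (w s) (w (s - h))) < e).
  { eapply Rle_lt_trans; [apply norm_le_B0; subspace_closure HP0; apply Hw; lra|].
    rewrite (norm_subC _ _ _ HP0 HN0) by (apply Hw; lra).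
    replace (s - h) with (s + - h) by ring.
    apply Hcont; [rewrite Rabs_Ropp, Rabs_pos_eq; lra | lra]. }
  assert (T4 : nrm a (vsub (w s) (Sg a h (w s))) < e).
  { rewrite (norm_subC _ _ _ HPa HNa) by (apply (C_in_B a); auto). apply Hsg; lra. }
  assert (S_bnd * e = eps / 2) by (unfold e; field; lra).
  assert (S_bnd * nrm a (vsub (w s) (w (s - h))) < S_bnd * e)
    by (apply Rmult_lt_compat_l; lra).
  assert (S_bnd * nrm a (vsub (w s) (Sg a h (w s))) < S_bnd * e)
    by (apply Rmult_lt_compat_l; lra).
  lra.
Qed.

(* The generator quotient [(S h - 1) w(s) / h] cancels [A w(s)] and leaves [Z w(s)]: the
   differential form of the mild formula [w(r) = S(r - c) w(c) + int_c^r S(r - s) Z w(s) ds]. *)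
Lemma mild_right_increment s h : 0 < h -> c <= s -> s + h <= r ->
  vsub (Sg a (r - (s + h)) (w (s + h))) (Sg a (r - s) (w s)) =
  Sg a (r - s - h) (vscal h (vadd (vsub (deriv_defect A Z w s h)
    (vsub (vscal (/ h) (vsub (Sg a h (w s)) (w s))) (A (w s)))) (Z (w s)))).
Proof.
  intros Hh Hs Hsh; assert (Hh0 : h <> 0) by lra.
  assert (Cws := w_in_C s ltac:(lra)); assert (Cwsh := w_in_C (s + h) ltac:(lra)).
  assert (CSh : C a (Sg a h (w s))) by (apply (sg_stable _ _ _ _ _ _ HSa); auto; lra).
  replace (Sg a (r - s) (w s)) with (Sg a (r - s - h) (Sg a h (w s))).
  2: { rewrite <- (sg_add _ _ _ _ _ _ HSa) by (auto; lra); f_equal; ring. }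
  replace (r - (s + h)) with (r - s - h) by ring.
  rewrite <- (sg_sub _ _ _ _ _ _ HCa HSa) by (auto; lra).
  f_equal; unfold deriv_defect.
  vring (w (s + h) :: w s :: Sg a h (w s) :: A (w s) :: Z (w s) :: nil).
Qed.

Lemma mild_right_deriv s : c <= s < r -> forall eps, 0 < eps -> exists delta, 0 < delta /\
  forall h, 0 < h < delta -> s + h <= r ->
    nrm a (vsub (Sg a (r - (s + h)) (w (s + h))) (Sg a (r - s) (w s)))
      <= h * (S_bnd * nrm a (Z (w s)) + eps).
Proof.
  intros Hs eps Heps.
  pose proof S_bnd_ge1 as Hnu.
  set (e := eps / (2 * S_bnd)).
  assert (He : 0 < e) by (unfold e; apply Rdiv_lt_0_compat; lra).
  destruct (proj1 Hw s ltac:(lra)) as [Bws [BAs BZs]].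
  destruct (proj2 Hw s ltac:(lra) e He) as [d1 [Hd1 Hdq]].
  destruct (sg_generator _ _ _ _ _ _ HSa (w s) (B0_in_D a _ Ha Bws) e He) as [d2 [Hd2 Hgen]].
  exists (Rmin d1 d2); split; [now apply Rmin_pos|]; intros h Hh Hsh.
  assert (h1 : h < d1) by (apply Rlt_le_trans with (1 := proj2 Hh), Rmin_l).
  assert (h2 : h < d2) by (apply Rlt_le_trans with (1 := proj2 Hh), Rmin_r).
  assert (Bwsh : B a0 (w (s + h))) by (apply Hw; lra).
  set (Gh := vscal (/ h) (vsub (Sg a h (w s)) (w s))).
  set (Y := vadd (vsub (deriv_defect A Z w s h) (vsub Gh (A (w s)))) (Z (w s))).
  assert (BDq : B a0 (deriv_defect A Z w s h)) by (unfold deriv_defect; subspace_closure HP0).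
  assert (CSh : C a (Sg a h (w s)))
    by (apply (sg_stable _ _ _ _ _ _ HSa); [lra | apply w_in_C; lra]).
  assert (CGh : C a Gh) by (unfold Gh; subspace_closure HCa; apply w_in_C; lra).
  assert (CDq : C a (deriv_defect A Z w s h)) by now apply B0_in_C.
  assert (CX : C a (vsub Gh (A (w s)))) by (subspace_closure HCa; now apply B0_in_C).
  assert (CZ : C a (Z (w s))) by now apply B0_in_C.
  assert (CY : C a Y) by (unfold Y; subspace_closure HCa).
  rewrite mild_right_increment by lra; fold Gh Y.
  eapply Rle_trans; [apply sg_norm_le; auto; [lra | subspace_closure HCa]|].
  rewrite (normZ _ _ _ HPa HNa), Rabs_pos_eq by (try apply (C_in_B a); auto; lra).
  assert (T1 : nrm a (deriv_defect A Z w s h) < e).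
  { eapply Rle_lt_trans; [now apply norm_le_B0|].
    apply Hdq; [lra | rewrite Rabs_pos_eq | ]; lra. }
  assert (T2 : nrm a (vsub Gh (A (w s))) < e) by (apply Hgen; lra).
  assert (TY : nrm a Y <= nrm a (deriv_defect A Z w s h) + nrm a (vsub Gh (A (w s)))
                         + nrm a (Z (w s))).
  { unfold Y; eapply Rle_trans;
      [apply (norm_triangle _ _ _ HPa HNa); apply (C_in_B a); auto; subspace_closure HCa|].
    pose proof (norm_sub_le _ _ _ HPa HNa _ _ (C_in_B a _ Ha CDq) (C_in_B a _ Ha CX)); lra. }
  assert (S_bnd * (2 * e) = eps) by (unfold e; field; lra).
  assert (S_bnd * nrm a Y <= S_bnd * nrm a (Z (w s)) + eps).
  { apply Rle_trans with (S_bnd * (2 * e + nrm a (Z (w s)))); [apply Rmult_le_compat_l; lra|].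
    lra. }
  nra.
Qed.

Lemma mild_power_bound (K : R) (k : nat) : 0 <= K -> w c = vzero ->
  (forall s, c <= s <= r -> S_bnd * nrm a (Z (w s)) <= K * INR (S k) * (s - c) ^ k) ->
  nrm a (w r) <= K * (r - c) ^ S k.
Proof.
  intros HK Hwc HZ.
  assert (Hmv := norm_mean_value _ _ _ HPa HNa (fun s => Sg a (r - s) (w s))
                   (fun s => K * (s - c) ^ S k) c r (proj1 Hr)).
  cbv beta in Hmv; rewrite !Rminus_diag, Hwc in Hmv.
  rewrite (sg_at0 _ _ _ _ _ _ HSa) in Hmv by (apply w_in_C; lra).
  rewrite (sg_zero _ _ _ _ _ _ HCa HSa), pow_i, Rmult_0_r, Rminus_0_r in Hmv by (lra || lia).
  replace (w r) with (vsub (w r) vzero) by vring (w r :: nil); apply Hmv; clear Hmv.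
  - intros s Hs; apply (C_in_B a); auto.
    apply (sg_stable _ _ _ _ _ _ HSa); [lra | apply w_in_C; lra].
  - apply mild_left_continuous.
  - intros s _; reg.
  - intros s Hs eps Heps; destruct (mild_right_deriv s Hs eps Heps) as [d [Hd Hder]].
    exists d; split; auto; intros h Hh Hsh.
    eapply Rle_trans; [apply Hder; auto|].
    pose proof (pow_add_ge k (s - c) h ltac:(lra) ltac:(lra)).
    pose proof (HZ s ltac:(lra)).
    replace (s + h - c) with (s - c + h) by ring.
    assert (K * ((s - c) ^ S k + INR (S k) * (s - c) ^ k * h) <= K * (s - c + h) ^ S k)
      by (apply Rmult_le_compat_l; auto).
    nra.
Qed.

End MildFormula.

Lemma ovsyannikov_step (w : R -> X) (c hi K a' d : R) (k : nat) :
  hi <= c + 1 -> 0 < d -> a0 <= a' -> a' + d <= b -> 0 <= K ->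
  solves_on (B a0) (nrm a0) A Z c hi w -> w c = vzero ->
  (forall r, c <= r <= hi ->
     nrm a' (w r) <= K * (ovs_const / d * (r - c)) ^ k / INR (fact k)) ->
  forall r, c <= r <= hi ->
    nrm (a' + d) (w r) <= K * (ovs_const / d * (r - c)) ^ S k / INR (fact (S k)).
Proof.
  intros Hhi Hd Ha' Had HK Hw Hwc IH r Hr.
  set (q := ovs_const / d).
  assert (Hq : 0 < q) by (unfold q; apply Rdiv_lt_0_compat; [apply ovs_const_pos | lra]).
  assert (Hfact : 0 < INR (fact k)) by apply INR_fact_lt_0.
  assert (Hfact' : 0 < INR (fact (S k))) by apply INR_fact_lt_0.
  assert (Hfact_S : INR (fact (S k)) = INR (S k) * INR (fact k))
    by (rewrite fact_simpl, mult_INR; reflexivity).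
  assert (HSk : 0 < INR (S k)) by (apply lt_0_INR; lia).
  set (K' := K * q ^ S k / INR (fact (S k))).
  assert (HK' : 0 <= K').
  { unfold K'; apply Rmult_le_pos; [apply Rmult_le_pos; auto; apply pow_le; lra|].
    left; now apply Rinv_0_lt_compat. }
  replace (K * (q * (r - c)) ^ S k / INR (fact (S k))) with (K' * (r - c) ^ S k)
    by (unfold K'; rewrite Rpow_mult_distr; field; lra).
  apply (mild_power_bound (a' + d) w c hi r); auto; try lra.
  intros s Hs.
  assert (Bws : B a0 (w s)) by (apply (proj1 Hw s); lra).
  assert (Bws' : B a' (w s)) by (apply (B_incl a0 a'); auto; lra).
  destruct (Z_loss a' (a' + d) (w s) Ha' ltac:(lra) Had Bws') as [_ HZ].
  replace (a' + d - a') with d in HZ by ring.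
  assert (0 <= nrm a' (w s))
    by (apply (norm_ge0 _ (B a')); auto; [apply B_subspace | apply B_norm]; lra).
  pose proof S_bnd_ge1.
  apply Rle_trans with (q * nrm a' (w s)).
  { unfold q, ovs_const; replace (S_bnd * Z_bnd / d * nrm a' (w s))
      with (S_bnd * (Z_bnd / d * nrm a' (w s))) by (field; lra).
    apply Rmult_le_compat_l; lra. }
  apply Rle_trans with (q * (K * (q * (s - c)) ^ k / INR (fact k))).
  { apply Rmult_le_compat_l; [lra | apply IH; lra]. }
  right; unfold K'; rewrite Hfact_S, Rpow_mult_distr; cbn [pow]; field; lra.
Qed.

Section LocalUniqueness.
Variables (w : R -> X) (c hi K : R).
Hypotheses (Hhi : hi <= c + 1) (Hw : solves_on (B a0) (nrm a0) A Z c hi w) (Hwc : w c = vzero)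
  (HK : forall r, c <= r <= hi -> nrm a0 (w r) <= K).

Lemma bound_nonneg : c <= hi -> 0 <= K.
Proof.
  intros Hch; apply Rle_trans with (nrm a0 (w c)); [|apply HK; lra].
  apply (norm_ge0 _ (B a0)); [apply B_subspace | apply B_norm | apply Hw]; lra.
Qed.

Lemma ovsyannikov_iterate (n : nat) : (0 < n)%nat -> c <= hi ->
  forall k, (k <= n)%nat -> forall r, c <= r <= hi ->
    nrm (a0 + INR k * ((b - a0) / INR n)) (w r)
      <= K * (ovs_const / ((b - a0) / INR n) * (r - c)) ^ k / INR (fact k).
Proof.
  intros Hn Hch; assert (Hn' : 0 < INR n) by now apply lt_0_INR.
  set (d := (b - a0) / INR n).
  assert (Hd : 0 < d) by (unfold d; apply Rdiv_lt_0_compat; lra).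
  assert (Hnd : INR n * d = b - a0) by (unfold d; field; lra).
  induction k as [|k IHk]; intros Hk r Hr.
  - replace (a0 + INR 0 * d) with a0 by (simpl; ring).
    replace (K * (ovs_const / d * (r - c)) ^ 0 / INR (fact 0)) with K by (simpl; field).
    now apply HK.
  - assert (Hle : INR (S k) <= INR n) by (apply le_INR; lia).
    rewrite S_INR in Hle |- *; pose proof (pos_INR k).
    replace (a0 + (INR k + 1) * d) with (a0 + INR k * d + d) by ring.
    apply (ovsyannikov_step w c hi K); auto; try lra.
    + assert (0 <= INR k * d) by (apply Rmult_le_pos; lra); lra.
    + assert ((INR k + 1) * d <= INR n * d) by (apply Rmult_le_compat_r; lra); lra.
    + now apply bound_nonneg.
    + intros; apply IHk; auto; lia.
Qed.

Hypothesis Hsmall : exp 1 * ovs_const * (hi - c) <= (b - a0) / 2.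

Lemma ovsyannikov_decay (n : nat) : (0 < n)%nat -> forall r, c <= r <= hi ->
  nrm b (w r) <= K * (/ 2) ^ n.
Proof.
  intros Hn r Hr; assert (Hn' : 0 < INR n) by now apply lt_0_INR.
  assert (HK0 := bound_nonneg ltac:(lra)).
  assert (Hc := ovsyannikov_iterate n Hn ltac:(lra) n (Nat.le_refl _) r Hr).
  replace (a0 + INR n * ((b - a0) / INR n)) with b in Hc by (field; lra).
  apply Rle_trans with (1 := Hc).
  set (x := ovs_const * (r - c) / (b - a0)).
  pose proof ovs_const_pos.
  assert (Hx0 : 0 <= x)
    by (unfold x; apply Rmult_le_pos; [nra | left; apply Rinv_0_lt_compat; lra]).
  assert (Hxe : exp 1 * x <= / 2).
  { unfold x; apply Rmult_le_reg_r with (b - a0); [lra|].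
    replace (exp 1 * (ovs_const * (r - c) / (b - a0)) * (b - a0))
      with (exp 1 * ovs_const * (r - c)) by (field; lra).
    assert (exp 1 * ovs_const * (r - c) <= exp 1 * ovs_const * (hi - c)).
    { apply Rmult_le_compat_l; [pose proof (exp_pos 1); nra | lra]. }
    lra. }
  replace (ovs_const / ((b - a0) / INR n) * (r - c)) with (x * INR n) by (unfold x; field; lra).
  assert (Hf : INR n ^ n <= exp 1 ^ n * INR (fact n))
    by (rewrite exp_pow, Rmult_1_r; apply pow_le_exp_fact).
  assert (HfK : 0 < INR (fact n)) by apply INR_fact_lt_0.
  assert (Hxn : 0 <= x ^ n) by (apply pow_le; lra).
  rewrite Rpow_mult_distr.
  apply Rle_trans with (K * (x ^ n * (exp 1 ^ n * INR (fact n))) / INR (fact n)).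
  { unfold Rdiv; apply Rmult_le_compat_r; [left; now apply Rinv_0_lt_compat|].
    apply Rmult_le_compat_l, Rmult_le_compat_l; auto. }
  replace (K * (x ^ n * (exp 1 ^ n * INR (fact n))) / INR (fact n)) with (K * (exp 1 * x) ^ n)
    by (rewrite Rpow_mult_distr; field; lra).
  apply Rmult_le_compat_l, pow_incr; auto; split; [pose proof (exp_pos 1); nra | lra].
Qed.

Lemma local_uniqueness r : c <= r <= hi -> w r = vzero.
Proof.
  intros Hr; assert (HK0 := bound_nonneg ltac:(lra)).
  assert (Bwr : B b (w r)) by (apply (B_incl a0 b); try lra; apply Hw; lra).
  apply (norm_le_eps_eq0 _ (B b) (nrm b)); auto; [apply B_subspace | apply B_norm|]; try lra.
  intros eps Heps.
  destruct (pow_lt_1_zero (/ 2) ltac:(rewrite Rabs_pos_eq; lra) (eps / (K + 1)))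
    as [n0 Hn0]; [apply Rdiv_lt_0_compat; lra|].
  specialize (Hn0 (S n0) ltac:(lia)); rewrite Rabs_pos_eq in Hn0 by (apply pow_le; lra).
  eapply Rle_lt_trans; [apply (ovsyannikov_decay (S n0)); auto; lia|].
  assert (0 <= (/ 2) ^ S n0) by (apply pow_le; lra).
  apply Rle_lt_trans with ((K + 1) * (/ 2) ^ S n0); [nra|].
  apply Rmult_lt_reg_r with (/ (K + 1)); [apply Rinv_0_lt_compat; lra|].
  replace ((K + 1) * (/ 2) ^ S n0 * / (K + 1)) with ((/ 2) ^ S n0) by (field; lra).
  exact Hn0.
Qed.

End LocalUniqueness.

Lemma solves_on_unique (w : R -> X) (lo hi : R) : lo <= hi ->
  solves_on (B a0) (nrm a0) A Z lo hi w -> w lo = vzero -> w hi = vzero.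
Proof.
  intros Hlh Hw Hwlo.
  assert (HP0 : subspace (B a0)) by (apply B_subspace; lra).
  assert (HN0 : norm_on (B a0) (nrm a0)) by (apply B_norm; lra).
  assert (Hcont := solves_on_continuous _ _ _ _ _ HP0 HN0 lo hi w Hw).
  apply (real_induction (fun y => w y = vzero) lo hi); [| |lra].
  - intros c Hc Hbelow; destruct (Rle_lt_or_eq_dec _ _ (proj1 Hc)) as [Hlc|Hlc]; [|now subst c].
    apply (norm_le_eps_eq0 _ _ _ HP0 HN0); [apply Hw; lra|]; intros eps Heps.
    destruct (Hcont c Hc eps Heps) as [d [Hd Hdc]].
    set (h := Rmin d (c - lo) / 2).
    assert (Hh : 0 < h < d /\ h < c - lo) by (unfold h; apply Rmin_case_strong; lra).
    specialize (Hdc (- h) ltac:(rewrite Rabs_Ropp, Rabs_pos_eq; lra) ltac:(lra)).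
    rewrite (Hbelow (c + - h)) in Hdc by lra.
    replace (vsub vzero (w c)) with (vopp (w c)) in Hdc by vring (w c :: nil).
    rewrite (normN _ _ _ HP0 HN0) in Hdc; auto; apply Hw; lra.
  - intros c Hc Hupto.
    destruct (Hcont c ltac:(lra) 1 ltac:(lra)) as [d [Hd Hdc]].
    pose proof ovs_const_pos; pose proof (exp_pos 1).
    set (eta := Rmin (Rmin 1 ((b - a0) / (2 * exp 1 * ovs_const))) (Rmin (d / 2) (hi - c))).
    assert (Heta : 0 < eta /\ eta <= 1 /\ eta <= (b - a0) / (2 * exp 1 * ovs_const)
                   /\ eta <= d / 2 /\ eta <= hi - c).
    { assert (0 < (b - a0) / (2 * exp 1 * ovs_const))
        by (apply Rdiv_lt_0_compat; [lra | nra]).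
      unfold eta; repeat apply Rmin_case_strong; lra. }
    exists eta; split; [lra|]; intros y Hy Hyh.
    apply (local_uniqueness w c (c + eta) 1); try lra.
    + apply (solves_on_sub_interval _ _ _ _ lo hi); auto; lra.
    + apply Hupto; lra.
    + intros r Hr; replace (w r) with (vsub (w (c + (r - c))) (w c)).
      * left; apply Hdc; [rewrite Rabs_pos_eq|]; lra.
      * rewrite (Hupto c), Rplus_minus by lra; vring (w r :: nil).
    + apply Rle_trans with (exp 1 * ovs_const * ((b - a0) / (2 * exp 1 * ovs_const))).
      * replace (c + eta - c) with eta by ring; apply Rmult_le_compat_l; [nra | lra].
      * right; field; lra.
Qed.

End Scale.

Lemma inI_exists_above al ah a : inI al ah a -> exists b, inI al ah b /\ a < b.
Proof.
  intros [Hl Hh]; destruct ah as [hb|].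
  - exists ((a + hb) / 2); split; [split|]; lra.
  - exists (a + 1); split; [split|]; auto; lra.
Qed.

Theorem proposition2 (X : RVS) (al : R) (ah : option R)
  (B : R -> X -> Prop) (nrm : R -> X -> R) (C D : R -> X -> Prop)
  (A Z : X -> X) (S : R -> R -> X -> X) (nu omega : R) (M N : R -> R) :
  Assum_A1 al ah B nrm ->
  Assum_A2 al ah B nrm C D A S nu omega ->
  Assum_A3 al ah B nrm Z M N ->
  forall (s astar a_s : R) (us : X) (tau t : R) (u : R -> X) (a_tau : R) (v : R -> X),
  0 <= s -> inI al ah astar -> al < a_s -> a_s < astar -> B a_s us ->
  s < tau -> tau < t -> tau < s + Tlen nu M a_s astar ->
  (* u = U(s, .) us *)
  is_solution B nrm A Z astar s (Tlen nu M a_s astar) us u ->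
  (* a_tau = alpha(tau, s, a_s) *)
  is_alpha_inf B (u tau) a_s astar a_tau ->
  t < Rmin (tau + Tlen nu M a_tau astar) (s + Tlen nu M a_s astar) ->
  (* v = U(tau, .) (U(s, tau) us) *)
  is_solution B nrm A Z astar tau (Tlen nu M a_tau astar) (u tau) v ->
  u t = v t.
Proof.
  intros HA1 HA2 HA3 s astar a_s us tau t u a_tau v _ HI _ _ _ Hst Htt _ Hu _ Hmin Hv.
  assert (Ht_tau : t < tau + Tlen nu M a_tau astar)
    by (eapply Rlt_le_trans; [exact Hmin | apply Rmin_l]).
  assert (Ht_s : t < s + Tlen nu M a_s astar)
    by (eapply Rlt_le_trans; [exact Hmin | apply Rmin_r]).
  destruct (inI_exists_above al ah astar HI) as [b [Hb Hab]].
  assert (Hban := proj1 (proj2 (proj2 HA1))); destruct (Hban astar HI) as [HP [HN _]].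
  apply vsub_eq0.
  apply (solves_on_unique X al ah B nrm C D A Z S nu omega M N HA1 HA2 HA3 astar b HI Hb Hab
           (fun r => vsub (u r) (v r)) tau t); [lra| |].
  - apply (solves_on_sub _ _ _ _ _ HP HN).
    + apply (linear_BI_sub al ah B A astar (proj1 (proj2 HA2)) HI HP).
    + apply (linear_BI_sub al ah B Z astar (proj1 (proj2 (proj2 (proj2 HA3)))) HI HP).
    + apply (is_solution_solves_on _ _ _ _ _ _ _ _ _ _ _ Hu); lra.
    + apply (is_solution_solves_on _ _ _ _ _ _ _ _ _ _ _ Hv); lra.
  - rewrite (proj1 Hv); vring (u tau :: nil).
Qed.
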